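(* Let $G=(V,E)$ be a $\lambda$-expander graph, $l\ge1$ an integer, and $f:V\to\mathbb R_{\ge0}$ such that $\Pr_{v\sim U(V)}(f(v)\ge x)\le\exp(-x(\ln x)^3)$ for all real $x\ge 20$, and suppose $\lambda\le\exp(-l(\ln l)^3)$. Then \[ \Pr_{w\sim\mathrm{Walk}(G,l)}\Big(\textstyle\sum_{i\in[l]}f(w_i)\ge C\,l\Big)\le\exp(-l), \] where $C:=e^2+e^3+(e-1)$ (note $C\le 30$).
   Context: $[l]:=\{0,\dots,l-1\}$; $U(V)$ is the uniform distribution on $V$. Graphs are finite, undirected, may have parallel edges and self-loops; the adjacency matrix $A=(a_{uv})$ counts edges between $u$ and $v$; the graph is $d$-regular ($d\ge1$) if $A$ is symmetric with all row sums $d$; it is a $\lambda$-expander if it is $d$-regular and the second largest absolute value of the eigenvalues of $A$ (with multiplicity) is at most $d\lambda$. $\mathrm{Walk}(G,l)$ is the distribution of $w=(w_0,\dots,w_{l-1})$ where $w_0$ is uniform on $V$ and $w_{i+1}=u$ with probability $a_{w_iu}/d$ given the past. *)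

From HB Require Import structures.
From mathcomp Require Import all_boot all_order all_algebra.
From mathcomp Require Import all_classical all_reals all_analysis.
Set Implicit Arguments. Unset Strict Implicit. Unset Printing Implicit Defensive.
Import Order.TTheory GRing.Theory Num.Theory.
Local Open Scope ring_scope.

(* Graph on vertex set V = 'I_n given by its adjacency matrix A (entries in nat,
   counting parallel edges / self-loops). *)

Definition regular (n : nat) (A : 'M[nat]_n) (d : nat) : Prop :=
  (0 < d)%N /\ A^T = A /\ forall i : 'I_n, (\sum_(j < n) A i j)%N = d.

Definition adjR (R : realType) (n : nat) (A : 'M[nat]_n) : 'M[R]_n :=
  map_mx (fun k : nat => k%:R) A.

(* lambda-expander: d-regular and the second largest absolute value of the
   eigenvalues (with multiplicity, i.e. the roots of the characteristic
   polynomial, which splits over R since A is symmetric) is at most d*lambda. *)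
Definition expander (R : realType) (n : nat) (A : 'M[nat]_n) (d : nat)
  (lam : R) : Prop :=
  regular A d /\
  exists s : seq R,
    char_poly (adjR R A) = \prod_(mu <- s) ('X - mu%:P) /\
    ((1 < size s)%N ->
       nth 0 (sort (fun x y : R => y <= x) [seq `|mu| | mu <- s]) 1
         <= d%:R * lam).

Definition prU (R : realType) (n : nat) (P : pred 'I_n) : R :=
  #|[set v | P v]|%:R / n%:R.

(* Probability of the walk w = (w_0,...,w_{l-1}) under Walk(G,l):
   (1/|V|) * prod_{i+1<l} a_{w_i w_{i+1}} / d *)
Definition walk_prob (R : realType) (n : nat) (A : 'M[nat]_n) (d l : nat)
  (w : {ffun 'I_l -> 'I_n}) : R :=
  n%:R^-1 * \prod_(i < l) \prod_(j < l | val j == (val i).+1)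
                             ((A (w i) (w j))%:R / d%:R).

Definition prWalk (R : realType) (n : nat) (A : 'M[nat]_n) (d l : nat)
  (P : pred {ffun 'I_l -> 'I_n}) : R :=
  \sum_(w : {ffun 'I_l -> 'I_n} | P w) walk_prob R A d w.

Definition constC (R : realType) : R :=
  expR 2 + expR 3 + (expR 1 - 1).
Arguments prU R {n} P.
Arguments prWalk R {n} A d l P.
Arguments expander {R n} A d lam.

From HB Require Import structures.
From mathcomp Require Import all_boot all_order all_algebra.
From mathcomp Require Import all_classical all_reals all_analysis.
From mathcomp Require Import complex.
From mathcomp Require Import ring lra.
Import Order.TTheory GRing.Theory Num.Theory.
Local Open Scope ring_scope.
Set Implicit Arguments. Unset Strict Implicit. Unset Printing Implicit Defensive.

(* Split the event according to whether some vertex of the walk has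
   [f >= T := max l 20].  By stationarity of the uniform distribution and the
   tail hypothesis this has probability at most [l e^(-8T) <= e^(-7l)].
   Otherwise [f] agrees along the walk with the truncation [g] of [x |-> e^x]
   at [T], and Markov's inequality bounds the probability by
   [e^(-Cl) E[prod_i g(w_i)]].  The expander moment bound
   [E[prod_i g(w_i)] <= E g (E g + lam e^T)^(l-1)] comes from the operator
   [y |-> s P (s y)], [s = sqrt g], [P] the transition matrix: on constants it
   acts with norm [E g], on the mean-zero space [P] contracts by [lam].  The
   tail hypothesis summed over unit shells gives [E g <= e^20 + 1], and
   [lam <= e^(-l (ln l)^3)] gives [lam e^T <= e^20]; hence the second term is
   at most [e^(-Cl) e^(21 l) <= e^(-2l)]. *)

Definition fcons (T : Type) l (a : T) (w : {ffun 'I_l -> T}) : {ffun 'I_l.+1 -> T} :=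
  [ffun i => if unlift ord0 i is Some j then w j else a].

Lemma fcons0 (T : Type) l (a : T) (w : {ffun 'I_l -> T}) : fcons a w ord0 = a.
Proof. by rewrite /fcons ffunE unlift_none. Qed.

Lemma fconsS (T : Type) l (a : T) (w : {ffun 'I_l -> T}) j : fcons a w (lift ord0 j) = w j.
Proof. by rewrite /fcons ffunE liftK. Qed.

Lemma big_ffunS (V : Type) (idx : V) (op : Monoid.com_law idx) (T : finType) l
    (F : {ffun 'I_l.+1 -> T} -> V) :
  \big[op/idx]_(w : {ffun 'I_l.+1 -> T}) F w =
  \big[op/idx]_(a : T) \big[op/idx]_(w : {ffun 'I_l -> T}) F (fcons a w).
Proof.
rewrite pair_big (reindex (fun p : T * {ffun 'I_l -> T} => fcons p.1 p.2)) //=.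
exists (fun w : {ffun 'I_l.+1 -> T} => (w ord0, [ffun j => w (lift ord0 j)])).
  move=> [a w] _ /=; rewrite fcons0; congr pair; apply/ffunP => j.
  by rewrite ffunE fconsS.
move=> w _; apply/ffunP => i; rewrite /fcons ffunE.
by case: unliftP => [j ->|->] //; rewrite ffunE.
Qed.

Lemma big_ord_eq_val (V : Type) (idx : V) (op : Monoid.law idx) m k
    (F : 'I_m -> V) (lt_km : (k < m)%N) :
  \big[op/idx]_(j < m | val j == k) F j = F (Ordinal lt_km).
Proof. by rewrite (eq_bigl (pred1 (Ordinal lt_km))) ?big_pred1_eq. Qed.

Lemma big_ord_eq_val_out (V : Type) (idx : V) (op : Monoid.law idx) m k
    (F : 'I_m -> V) :
  (m <= k)%N -> \big[op/idx]_(j < m | val j == k) F j = idx.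
Proof.
move=> le_mk; apply: big1 => j /eqP val_j.
by have := ltn_ord j; rewrite val_j ltnNge le_mk.
Qed.

Lemma sum_nat_of_bool (R : pzSemiRingType) (T : finType) (P : pred T) :
  \sum_(x : T) (P x)%:R = #|[set x | P x]|%:R :> R.
Proof.
rewrite -natr_sum -sum1dep_card; congr _%:R.
by rewrite [RHS]big_mkcond; apply: eq_bigr => x _; case: (P x).
Qed.

Section Walks.
Variables (R : realType) (n : nat) (A : 'M[nat]_n) (d : nat).

Definition trans (a b : 'I_n) : R := (A a b)%:R / d%:R.

Definition walk_weight l (w : {ffun 'I_l -> 'I_n}) : R :=
  \prod_(i < l) \prod_(j < l | val j == (val i).+1) trans (w i) (w j).

Definition expectWalk l (F : {ffun 'I_l -> 'I_n} -> R) : R :=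
  \sum_w walk_prob R A d w * F w.

Definition meanU (g : 'I_n -> R) : R := (\sum_a g a) / n%:R.

Lemma trans_ge0 a b : 0 <= trans a b.
Proof. by rewrite divr_ge0 ?ler0n. Qed.

Lemma walk_prob_ge0 l (w : {ffun 'I_l -> 'I_n}) : 0 <= walk_prob R A d w.
Proof.
rewrite mulr_ge0 ?invr_ge0 ?ler0n //.
by apply: prodr_ge0 => i _; apply: prodr_ge0 => j _; apply: trans_ge0.
Qed.

Lemma walk_weight1 (w : {ffun 'I_1 -> 'I_n}) : walk_weight w = 1.
Proof. by rewrite /walk_weight big_ord1 big_ord_eq_val_out. Qed.

Lemma walk_weight_cons l a (w : {ffun 'I_l.+1 -> 'I_n}) :
  walk_weight (fcons a w) = trans a (w ord0) * walk_weight w.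
Proof.
rewrite /walk_weight big_ord_recl /= (big_ord_eq_val _ _ (isT : (1 < l.+2)%N)).
have -> : Ordinal (isT : (1 < l.+2)%N) = lift ord0 ord0 by apply/val_inj.
rewrite fcons0 fconsS; congr (_ * _); apply: eq_bigr => i _.
rewrite big_mkcond big_ord_recl /= fconsS mul1r [in RHS]big_mkcond.
by apply: eq_bigr => j _ /=; rewrite !fconsS.
Qed.

(* The sum, over the walks [w] of length [l.+1] starting at [a], of the weight
   of [w] times [\prod_(i <= l) h i (w i)], computed by a backward recursion. *)
Fixpoint transfer (l : nat) (h : nat -> 'I_n -> R) (a : 'I_n) : R :=
  h 0%N a * (if l is l'.+1 then \sum_b trans a b * transfer l' (fun i => h i.+1) b
             else 1).

Lemma sum_walk_weight_prod l (h : nat -> 'I_n -> R) :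
  \sum_(w : {ffun 'I_l.+1 -> 'I_n}) walk_weight w * \prod_(i < l.+1) h i (w i)
  = \sum_a transfer l h a.
Proof.
elim: l h => [|l IHl] h; rewrite big_ffunS; apply: eq_bigr => a _ /=.
  under eq_bigr do rewrite walk_weight1 mul1r big_ord1 fcons0.
  by rewrite sumr_const card_ffun !card_ord mulr1.
pose h' i := if i is 0 then (fun b => trans a b * h 1%N b) else h i.+1.
under eq_bigr => w _.
  rewrite walk_weight_cons big_ord_recl fcons0.
  under eq_bigr do rewrite fconsS.
  have E : \prod_(i < l.+1) h i.+1 (w i) * trans a (w ord0)
          = \prod_(i < l.+1) h' i (w i) by rewrite !big_ord_recl /=; ring.
  have -> : trans a (w ord0) * walk_weight w * (h 0%N a * \prod_(i < l.+1) h i.+1 (w i))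
          = h 0%N a * (walk_weight w * \prod_(i < l.+1) h' i (w i)).
    by rewrite -[in RHS]E; ring.
  over.
rewrite -mulr_sumr IHl; congr (_ * _); apply: eq_bigr => b _.
by case: l {IHl} => [|l] /=; rewrite mulrA.
Qed.

Lemma expectWalk_prod l (g : 'I_n -> R) :
  expectWalk (fun w : {ffun 'I_l.+1 -> 'I_n} => \prod_(i < l.+1) g (w i))
  = n%:R^-1 * \sum_a transfer l (fun _ => g) a.
Proof.
rewrite -sum_walk_weight_prod mulr_sumr; apply: eq_bigr => w _.
by rewrite /walk_prob -mulrA.
Qed.

Lemma prWalk_le_expectWalk l (P : pred {ffun 'I_l -> 'I_n})
    (F : {ffun 'I_l -> 'I_n} -> R) :
  (forall w, 0 <= F w) -> (forall w, P w -> 1 <= F w) ->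
  prWalk R A d l P <= expectWalk F.
Proof.
move=> F_ge0 PF; rewrite /prWalk /expectWalk big_mkcond; apply: ler_sum => w _.
case: ifP => Pw; last by rewrite mulr_ge0 ?walk_prob_ge0.
by rewrite -[X in X <= _]mulr1 ler_wpM2l ?walk_prob_ge0 ?PF.
Qed.

Hypothesis regA : regular A d.

Lemma sum_trans_row a : \sum_b trans a b = 1.
Proof.
case: regA => d_gt0 [_ rowA].
by rewrite /trans -mulr_suml -natr_sum rowA divff // pnatr_eq0 -lt0n.
Qed.

Lemma regular_sym a b : A a b = A b a.
Proof. by case: regA => _ [symA _]; rewrite -[in LHS]symA mxE. Qed.

Lemma sum_trans_col b : \sum_a trans a b = 1.
Proof.
by rewrite -(sum_trans_row b); apply: eq_bigr => a _; rewrite /trans regular_sym.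
Qed.

Lemma transfer_ones l (h : nat -> 'I_n -> R) a :
  (forall j x, h j x = 1) -> transfer l h a = 1.
Proof.
elim: l h a => [|l IHl] h a h1 /=; first by rewrite h1 mulr1.
rewrite h1 mul1r -[RHS](sum_trans_row a); apply: eq_bigr => b _.
by rewrite IHl ?mulr1.
Qed.

(* The uniform distribution is stationary because [trans] is doubly stochastic. *)
Lemma sum_transfer_single l i (h : nat -> 'I_n -> R) :
  (i <= l)%N -> (forall j x, j != i -> h j x = 1) ->
  \sum_a transfer l h a = \sum_a h i a.
Proof.
elim: i l h => [|i IHi] [|l] h //= le_il h1.
- by under eq_bigr do rewrite mulr1.
- apply: eq_bigr => a _; rewrite -[RHS]mulr1 -(sum_trans_row a); congr (_ * _).
  by apply: eq_bigr => b _; rewrite transfer_ones ?mulr1 // => j x; apply: h1.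
under eq_bigr do rewrite h1 // mul1r.
rewrite exchange_big /= -(IHi l (fun j => h j.+1)) //; last by move=> j x ji; apply: h1.
by apply: eq_bigr => b _; rewrite -mulr_suml sum_trans_col mul1r.
Qed.

Lemma expectWalk_marginal l (i : 'I_l) (P : pred 'I_n) :
  expectWalk (fun w => (P (w i))%:R) = prU R P.
Proof.
case: l i => [[] //|l] i.
pose h j (x : 'I_n) : R := if j == val i then (P x)%:R else 1.
have h1 j x : j != val i -> h j x = 1 by rewrite /h => /negbTE ->.
transitivity (n%:R^-1 * \sum_a transfer l h a).
  rewrite -sum_walk_weight_prod mulr_sumr; apply: eq_bigr => w _.
  rewrite /walk_prob -mulrA; congr (_ * (_ * _)).
  rewrite (bigD1 i) //= big1 => [|j ji]; last exact: h1 ji.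
  by rewrite /h eqxx mulr1.
have le_il : (val i <= l)%N := ltn_ord i.
rewrite (sum_transfer_single le_il h1) /h eqxx sum_nat_of_bool.
by rewrite /prU mulrC.
Qed.

End Walks.

Section SquareNorm.
Variables (R : realFieldType) (n : nat).
Implicit Types y z : 'I_n -> R.

Definition sqnorm y := \sum_a y a ^+ 2.
Definition vdot y z := \sum_a y a * z a.

Lemma sqnorm_ge0 y : 0 <= sqnorm y.
Proof. by apply: sumr_ge0 => a _; rewrite sqr_ge0. Qed.

Lemma sqnorm_eq0 y : sqnorm y = 0 -> forall a, y a = 0.
Proof.
move=> /psumr_eq0P y0 a; apply/eqP; rewrite -sqrf_eq0; apply/eqP.
by apply: y0 => // b _; rewrite sqr_ge0.
Qed.

Lemma vdot_sqr_le y z : vdot y z ^+ 2 <= sqnorm y * sqnorm z.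
Proof.
have [z0|z_neq0] := eqVneq (sqnorm z) 0.
  by rewrite z0 mulr0 /vdot big1 ?expr0n // => a _; rewrite (sqnorm_eq0 z0) mulr0.
have z_gt0 : 0 < sqnorm z by rewrite lt_neqAle eq_sym z_neq0 sqnorm_ge0.
set S := sqnorm z; set D := vdot y z.
have : 0 <= S * (S * sqnorm y - D ^+ 2).
  have <- : \sum_a (y a * S - z a * D) ^+ 2 = S * (S * sqnorm y - D ^+ 2).
    rewrite (eq_bigr (fun a => S ^+ 2 * y a ^+ 2 - (2 * S * D) * (y a * z a)
                               + D ^+ 2 * z a ^+ 2)) => [|a _]; last by ring.
    rewrite big_split /= sumrB -!mulr_sumr -/(sqnorm y) -/(vdot y z) -/(sqnorm z).
    by rewrite -/D -/S; ring.
  by apply: sumr_ge0 => a _; rewrite sqr_ge0.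
by rewrite pmulr_rge0 // subr_ge0 mulrC.
Qed.

Lemma vdot_le y z c : 0 <= c -> sqnorm y * sqnorm z <= c ^+ 2 -> vdot y z <= c.
Proof. by move=> c_ge0 /(le_trans (vdot_sqr_le y z)) le_c; nra. Qed.

Lemma sqnorm_add_le y z (al be Y : R) :
  0 <= al -> 0 <= be -> 0 <= Y ->
  sqnorm y <= al ^+ 2 * Y -> sqnorm z <= be ^+ 2 * Y ->
  sqnorm (fun a => y a + z a) <= (al + be) ^+ 2 * Y.
Proof.
move=> al_ge0 be_ge0 Y_ge0 y_le z_le.
have yz_le : vdot y z <= al * be * Y.
  apply: vdot_le; first by rewrite !mulr_ge0.
  rewrite (_ : (al * be * Y) ^+ 2 = (al ^+ 2 * Y) * (be ^+ 2 * Y)); last by ring.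
  by rewrite ler_pM ?sqnorm_ge0.
have -> : sqnorm (fun a => y a + z a) = sqnorm y + 2 * vdot y z + sqnorm z.
  rewrite /sqnorm /vdot mulr_sumr -!big_split /=.
  by apply: eq_bigr => a _; ring.
nra.
Qed.

Lemma sqnorm_mul_le (s y : 'I_n -> R) (K : R) :
  (forall a, s a ^+ 2 <= K) -> sqnorm (fun a => s a * y a) <= K * sqnorm y.
Proof.
move=> s_le; rewrite /sqnorm mulr_sumr; apply: ler_sum => a _.
by rewrite exprMn ler_wpM2r ?sqr_ge0.
Qed.

Lemma sqnorm_iter_le (f : ('I_n -> R) -> 'I_n -> R) (c : R) k y :
  (forall y, sqnorm (f y) <= c ^+ 2 * sqnorm y) ->
  sqnorm (iter k f y) <= (c ^+ k) ^+ 2 * sqnorm y.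
Proof.
move=> f_le; elim: k => [|k IHk]; first by rewrite expr0 expr1n mul1r.
rewrite iterS; apply: le_trans (f_le _) _.
by rewrite [c ^+ k.+1]exprS exprMn -[c ^+ 2 * _ * _]mulrA ler_wpM2l ?sqr_ge0.
Qed.

End SquareNorm.

Local Open Scope sesquilinear_scope.

Lemma char_poly_similar (F : fieldType) n (U B : 'M[F]_n) :
  U \in unitmx -> char_poly (invmx U *m B *m U) = char_poly B.
Proof.
move=> U_unit; rewrite /char_poly.
set P := map_mx (@polyC F) U; set Pi := map_mx (@polyC F) (invmx U).
have PiP : Pi *m P = 1%:M by rewrite -map_mxM mulVmx // map_mx1.
have -> : char_poly_mx (invmx U *m B *m U) = Pi *m char_poly_mx B *m P.
  rewrite /char_poly_mx !map_mxM -/P -/Pi mulmxBr mulmxBl.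
  by rewrite mul_mx_scalar -scalemxAl PiP scalemx1.
have detPiP : \det Pi * \det P = 1 by rewrite -det_mulmx PiP det1.
by rewrite !det_mulmx -[RHS]mul1r -detPiP; ring.
Qed.

Definition second_abs (R : realDomainType) (s : seq R) : R :=
  nth 0 (sort (fun x y : R => y <= x) [seq `|mu| | mu <- s]) 1.

Lemma second_abs_ge0 (R : realDomainType) (s : seq R) :
  (1 < size s)%N -> 0 <= second_abs s.
Proof.
move=> s_gt1; rewrite /second_abs.
have : nth 0 (sort (fun x y : R => y <= x) [seq `|mu| | mu <- s]) 1
         \in sort (fun x y : R => y <= x) [seq `|mu| | mu <- s].
  by apply: mem_nth; rewrite size_sort size_map.
by rewrite mem_sort => /mapP [mu _ ->].
Qed.

Lemma count_abs_gt_second_abs (R : realDomainType) (s : seq R) (c : R) :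
  (1 < size s)%N -> second_abs s <= c -> (count (fun mu => (c < `|mu|)%R) s <= 1)%N.
Proof.
rewrite /second_abs => s_gt1.
have perm_s : perm_eq (sort (fun x y : R => y <= x) [seq `|mu| | mu <- s])
                      [seq `|mu| | mu <- s] by rewrite perm_sort.
rewrite -count_map -(permP perm_s).
have : sorted (fun x y : R => y <= x) (sort (fun x y : R => y <= x) [seq `|mu| | mu <- s]).
  by apply: sort_sorted => x y; rewrite le_total.
have := size_sort (fun x y : R => y <= x) [seq `|mu| | mu <- s].
rewrite size_map; case: sort => [|a [|b rest]] /= size_s; rewrite -?size_s // in s_gt1.
move=> /andP [_ path_b] b_le_c.
have rest_le_b : all (fun x => x <= b) rest.
  by apply: order_path_min path_b => x y z yx zy; apply: le_trans zy yx.
have -> : count (fun x => c < x) rest = 0%N.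
  apply/eqP; rewrite -leqn0 leqNgt -has_count; apply/hasPn => x /(allP rest_le_b) xb.
  by rewrite -leNgt (le_trans xb).
by rewrite addn0 [c < b]ltNge b_le_c addn0 leq_b1.
Qed.

Lemma normc_real (R : rcfType) (x : R) : `|real_complex R x| = real_complex R `|x|.
Proof. by rewrite normc_def /= expr0n /= addr0 sqrtr_sqr. Qed.

Lemma normalmx_orth_ones_norm_le (C : numClosedFieldType) n (M : 'M[C]_n)
    (dd t : C) (x : 'rV[C]_n) :
  M \is normalmx ->
  (forall i j, t < `|spectral_diag M 0 i| -> t < `|spectral_diag M 0 j| -> i = j) ->
  0 <= t -> t < dd ->
  (const_mx 1 : 'rV[C]_n) *m M = dd *: const_mx 1 ->
  \sum_j x 0 j = 0 ->
  \sum_j `|(x *m M) 0 j| ^+ 2 <= t ^+ 2 * \sum_j `|x 0 j| ^+ 2.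
Proof.
move=> normalM one_big t_ge0 lt_t_dd onesM x_orth.
set U := spectralmx M; set D := spectral_diag M.
have M_diag : M = invmx U *m diag_mx D *m U by apply/orthomx_spectralP.
have invU : invmx U = U ^t* by apply/invmx_unitary/spectral_unitarymx.
have UUt : U *m U ^t* = 1%:M by apply/unitarymxP/spectral_unitarymx.
have UtU : U ^t* *m U = 1%:M by rewrite -invU mulVmx ?spectral_unit.
have sqnormU (w : 'rV_n) : \sum_j `|(w *m U) 0 j| ^+ 2 = \sum_j `|w 0 j| ^+ 2.
  have normE (v : 'rV[C]_n) : \sum_j `|v 0 j| ^+ 2 = (v *m v ^t*) 0 0.
    by rewrite !mxE; apply: eq_bigr => j _; rewrite !mxE normCK.
  by rewrite !normE trmx_mul map_mxM mulmxA -(mulmxA w U) UUt mulmx1.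
set Y := x *m U ^t*; set Z := (const_mx 1 : 'rV[C]_n) *m U ^t*.
have xE : x = Y *m U by rewrite /Y -mulmxA UtU mulmx1.
rewrite (_ : x *m M = Y *m diag_mx D *m U); last by rewrite M_diag invU !mulmxA.
rewrite sqnormU [in X in _ <= _ * X]xE sqnormU mulr_sumr.
apply: ler_sum => j _; rewrite mul_mx_diag mxE normrM exprMn.
have [Dj_le|] := boolP (`|D 0 j| <= t).
  by rewrite mulrC ler_wpM2r ?exprn_ge0 ?lerXn2r ?nnegrE.
rewrite -real_ltNge ?realE ?normr_ge0 ?t_ge0 // => lt_t_Dj.
(* [Y] is orthogonal to the coordinates [Z] of the eigenvector [1], which are
   supported on the single eigenvalue exceeding [t], namely [D 0 j]. *)
suff -> : Y 0 j = 0 by rewrite normr0 expr0n /= !mul0r mulr0.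
have ZD : Z *m diag_mx D = dd *: Z.
  have := congr1 (fun N : 'rV[C]_n => N *m U ^t*) onesM; rewrite /= M_diag invU !mulmxA.
  by rewrite -(mulmxA _ U) UUt mulmx1 => ->; rewrite scalemxAl.
have Z_supp k : Z 0 k != 0 -> k = j.
  move=> Zk_neq0; apply: one_big lt_t_Dj; rewrite -/D.
  have -> : D 0 k = dd.
    apply: (mulfI Zk_neq0); have := congr1 (fun N : 'rV[C]_n => N 0 k) ZD.
    by rewrite /= mul_mx_diag !mxE => ->; rewrite mulrC.
  by rewrite gtr0_norm // (le_lt_trans t_ge0).
have Zj_neq0 : Z 0 j != 0.
  apply: contraT => /negbNE/eqP Zj0.
  have Z0 : Z = 0.
    apply/rowP => k; rewrite [RHS]mxE; apply/eqP; apply: contraT => Zk.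
    by move: (Zk); rewrite (Z_supp k Zk) Zj0 eqxx.
  have : (const_mx 1 : 'rV[C]_n) = Z *m U by rewrite /Z -mulmxA UtU mulmx1.
  by rewrite Z0 mul0mx => /rowP/(_ j); rewrite !mxE => /eqP; rewrite oner_eq0.
have : (Y *m Z ^t*) 0 0 = 0.
  rewrite /Y /Z trmx_mul map_mxM trmxCK mulmxA -(mulmxA x) UtU mulmx1.
  rewrite mxE; apply: etrans x_orth; apply: eq_bigr => k _.
  by rewrite !mxE rmorph1 mulr1.
have ZtE k : (Z ^t*) k 0 = (Z 0 k)^* by rewrite !mxE.
rewrite mxE (bigD1 j) //= big1 ?addr0 => [|k kj]; last first.
  rewrite ZtE; have -> : Z 0 k = 0 by apply/eqP; apply: contraR kj => /Z_supp ->.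
  by rewrite conjC0 mulr0.
by rewrite ZtE => /eqP; rewrite mulf_eq0 conjC_eq0 (negbTE Zj_neq0) orbF => /eqP.
Qed.

Section ExpanderContraction.
Variables (R : realType) (n : nat) (A : 'M[nat]_n) (d : nat).

Definition markov_op (z : 'I_n -> R) (a : 'I_n) : R := \sum_b trans R A d a b * z b.

Lemma expander_spectrum (lam : R) : expander A d lam -> (1 < n)%N ->
  0 <= lam /\ exists2 s : seq R, char_poly (adjR R A) = \prod_(mu <- s) ('X - mu%:P)
                              & (count (fun mu => (d%:R * lam < `|mu|)%R) s <= 1)%N.
Proof.
move=> [[d_gt0 _] [s [cpA second_le]]] n_gt1.
have size_s : size s = n.
  have := congr1 (fun p : {poly R} => size p) cpA.
  by rewrite /= size_char_poly size_prod_XsubC; case.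
have s_gt1 : (1 < size s)%N by rewrite size_s.
split; last by exists s => //; apply: count_abs_gt_second_abs (second_le s_gt1).
rewrite -(pmulr_rge0 _ (_ : 0 < d%:R :> R)) ?ltr0n //.
exact: le_trans (second_abs_ge0 s_gt1) (second_le s_gt1).
Qed.

Hypothesis regA : regular A d.
Local Open Scope complex_scope.

Lemma markov_op_sqr_le z a : markov_op z a ^+ 2 <= \sum_b trans R A d a b * z b ^+ 2.
Proof.
set m := markov_op z a.
have : 0 <= \sum_b trans R A d a b * (z b - m) ^+ 2.
  by apply: sumr_ge0 => b _; rewrite mulr_ge0 ?trans_ge0 ?sqr_ge0.
rewrite (eq_bigr (fun b => trans R A d a b * z b ^+ 2 - 2 * m * (trans R A d a b * z b)
                           + m ^+ 2 * trans R A d a b)) => [|b _]; last by ring.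
rewrite !big_split /= sumrN -!mulr_sumr (sum_trans_row _ regA) -/(markov_op z a) -/m.
nra.
Qed.

Lemma sqnorm_markov_op_le z : sqnorm (markov_op z) <= sqnorm z.
Proof.
apply: le_trans (ler_sum _ (fun a _ => markov_op_sqr_le z a)) _.
rewrite exchange_big /= (eq_bigr (fun b => z b ^+ 2)) // => b _.
by rewrite -mulr_suml (sum_trans_col _ regA) mul1r.
Qed.

Definition adjC : 'M[R[i]]_n := map_mx (fun k : nat => k%:R) A.

Lemma adjC_normal : adjC \is normalmx.
Proof.
have adjCt : adjC ^t* = adjC.
  by apply/matrixP => a b; rewrite !mxE (regular_sym regA) conjC_nat.
by apply/normalmxP; rewrite adjCt.
Qed.

Lemma spectral_diag_adjC_perm (s : seq R) :
  char_poly (adjR R A) = \prod_(mu <- s) ('X - mu%:P) ->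
  perm_eq [seq spectral_diag adjC 0 i | i <- index_enum 'I_n] [seq mu%:C | mu <- s].
Proof.
move=> cpA; apply: prod_XsubC_eq; rewrite !big_map.
have -> : \prod_(mu <- s) ('X - (mu%:C)%:P) = char_poly adjC.
  rewrite (_ : adjC = map_mx (real_complex R) (adjR R A)); last first.
    by apply/matrixP => a b; rewrite !mxE rmorph_nat.
  rewrite -map_char_poly cpA rmorph_prod; apply: eq_bigr => mu _.
  by symmetry; apply: map_polyXsubC.
rewrite [in RHS](orthomx_spectralP adjC_normal) char_poly_similar ?spectral_unit //.
rewrite char_poly_trig ?diag_mx_is_trig //.
by apply: eq_bigr => i _; rewrite mxE eqxx mulr1n.
Qed.

Lemma spectral_diag_adjC_gt_uniq (s : seq R) (c : R) :
  char_poly (adjR R A) = \prod_(mu <- s) ('X - mu%:P) ->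
  (count (fun mu => (c < `|mu|)%R) s <= 1)%N ->
  forall i j, c%:C < `|spectral_diag adjC 0 i| -> c%:C < `|spectral_diag adjC 0 j| ->
  i = j.
Proof.
move=> cpA count_s i j ci cj; apply/eqP; apply: contraT => ij.
set Ds := [seq spectral_diag adjC 0 k | k <- index_enum 'I_n].
have count_C : count (fun z => (c%:C < `|z|)%R) [seq mu%:C | mu <- s]
             = count (fun mu => (c < `|mu|)%R) s.
  by rewrite count_map; apply: eq_count => mu /=; rewrite normc_real ltcR.
suff : (2 <= count (fun z => (c%:C < `|z|)%R) Ds)%N.
  by rewrite (permP (spectral_diag_adjC_perm cpA)) count_C => /leq_trans/(_ count_s).
rewrite count_map -sum1_count (bigD1 i) //= (bigD1 j) /=; last by rewrite cj eq_sym ij.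
by rewrite add1n ltnS addSn ltnS.
Qed.

Lemma sqnorm_markov_op_orth_le (s : seq R) (lam : R) z :
  char_poly (adjR R A) = \prod_(mu <- s) ('X - mu%:P) ->
  (count (fun mu => (d%:R * lam < `|mu|)%R) s <= 1)%N ->
  0 <= lam -> lam < 1 -> \sum_a z a = 0 ->
  sqnorm (markov_op z) <= lam ^+ 2 * sqnorm z.
Proof.
move=> cpA count_s lam_ge0 lam_lt1 z_orth.
have d_gt0 : 0 < d%:R :> R by case: regA => d_gt0 _; rewrite ltr0n.
pose x : 'rV[R[i]]_n := \row_j (z j)%:C.
have onesA : (const_mx 1 : 'rV[R[i]]_n) *m adjC = (d%:R)%:C *: const_mx 1.
  apply/rowP => j; rewrite !mxE rmorph_nat mulr1.
  under eq_bigr do rewrite !mxE mul1r (regular_sym regA).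
  by case: regA => _ [_ rowA]; rewrite -natr_sum rowA.
have x_orth : \sum_j x 0 j = 0.
  by under eq_bigr do rewrite mxE; rewrite -rmorph_sum z_orth.
have xA j : (x *m adjC) 0 j = (d%:R * markov_op z j)%:C.
  rewrite mxE /markov_op mulr_sumr rmorph_sum; apply: eq_bigr => b _.
  rewrite !mxE /trans (regular_sym regA) (_ : d%:R * _ = z b * (A j b)%:R).
    by rewrite rmorphM rmorph_nat.
  by field; rewrite gt_eqF.
have sqnormC (y : 'I_n -> R) : \sum_j `|(y j)%:C| ^+ 2 = (sqnorm y)%:C.
  rewrite rmorph_sum; apply: eq_bigr => j _.
  by rewrite normc_real -rmorphXn real_normK ?num_real.
have := normalmx_orth_ones_norm_le adjC_normal
          (spectral_diag_adjC_gt_uniq cpA count_s) _ _ onesA x_orth.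
rewrite (eq_bigr _ (fun j _ => congr1 (fun c => `|c| ^+ 2) (xA j))).
have x_sq : \sum_j `|x 0 j| ^+ 2 = (sqnorm z)%:C.
  by rewrite -sqnormC; apply: eq_bigr => j _; rewrite mxE.
rewrite x_sq sqnormC -rmorphXn -rmorphM !lecR ltcR.
have -> : sqnorm (fun j => d%:R * markov_op z j) = d%:R ^+ 2 * sqnorm (markov_op z).
  by rewrite /sqnorm mulr_sumr; apply: eq_bigr => j _; rewrite exprMn.
have dlam_lt : d%:R * lam < d%:R by rewrite gtr_pMr.
move=> /(_ (mulr_ge0 (ltW d_gt0) lam_ge0) dlam_lt).
by rewrite exprMn -[_ * lam ^+ 2 * _]mulrA ler_pM2l ?exprn_gt0.
Qed.

End ExpanderContraction.

Lemma expander_contraction (R : realType) n (A : 'M[nat]_n) d (lam mu : R) z :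
  expander A d lam -> lam <= mu -> \sum_a z a = 0 ->
  sqnorm (markov_op A d z) <= mu ^+ 2 * sqnorm z.
Proof.
move=> expA le_lam_mu z_orth; have [regA _] := expA.
have [mu_ge1|mu_lt1] := leP 1 mu.
  apply: le_trans (sqnorm_markov_op_le regA z) _.
  by rewrite ler_peMl ?sqnorm_ge0 // expr_ge1 // (le_trans ler01).
have [n_le1|n_gt1] := leqP n 1.
  have ord_eq (b c : 'I_n) : b = c.
    have val0 (e : 'I_n) : val e = 0%N.
      by apply/eqP; rewrite -leqn0 -ltnS (leq_trans (ltn_ord e)).
    by apply/val_inj; rewrite !val0.
  have z0 b : z b = 0.
    rewrite -z_orth (eq_bigl (pred1 b)) ?big_pred1_eq // => c.
    by rewrite /= (ord_eq c b) eqxx.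
  have -> : sqnorm (markov_op A d z) = 0.
    by apply: big1 => a _; rewrite /markov_op big1 ?expr0n // => b _; rewrite z0 mulr0.
  by rewrite mulr_ge0 ?sqr_ge0 ?sqnorm_ge0.
have [lam_ge0 [s cpA count_s]] := expander_spectrum expA n_gt1.
have lam_lt1 : lam < 1 := le_lt_trans le_lam_mu mu_lt1.
apply: le_trans (sqnorm_markov_op_orth_le regA cpA count_s lam_ge0 lam_lt1 z_orth) _.
by rewrite ler_wpM2r ?sqnorm_ge0 ?lerXn2r ?nnegrE // (le_trans lam_ge0).
Qed.

Section ProductMoment.
Variables (R : realType) (n : nat) (A : 'M[nat]_n) (d : nat).
Hypothesis regA : regular A d.

Definition tilt_op (s y : 'I_n -> R) (a : 'I_n) : R :=
  s a * markov_op A d (fun b => s b * y b) a.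

Lemma sqnorm_tilt_op_le (s y : 'I_n -> R) (K mu : R) :
  (0 < n)%N -> 0 <= K -> 0 <= mu -> (forall a, s a ^+ 2 <= K) ->
  (forall z, \sum_a z a = 0 -> sqnorm (markov_op A d z) <= mu ^+ 2 * sqnorm z) ->
  sqnorm (tilt_op s y) <= (sqnorm s / n%:R + mu * K) ^+ 2 * sqnorm y.
Proof.
move=> n_gt0 K_ge0 mu_ge0 s_le contr.
have n_neq0 : n%:R != 0 :> R by rewrite pnatr_eq0 -lt0n.
set z := fun b => s b * y b; set m := (\sum_b z b) / n%:R.
(* The mean [m] of [z] is fixed by [markov_op]; its mean-zero part [z0] is
   contracted by [mu]. *)
set z0 := fun b => z b - m.
have sum_z : \sum_b z b = n%:R * m by rewrite /m mulrC divfK.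
have z0_orth : \sum_b z0 b = 0.
  by rewrite /z0 sumrB sumr_const card_ord sum_z mulr_natl subrr.
have markov_z a : markov_op A d z a = m + markov_op A d z0 a.
  rewrite /markov_op /z0; under [in RHS]eq_bigr do rewrite mulrBr.
  by rewrite sumrB -mulr_suml (sum_trans_row _ regA) mul1r addrC subrK.
have -> : sqnorm (tilt_op s y) = sqnorm (fun a => s a * m + s a * markov_op A d z0 a).
  by apply: eq_bigr => a _; rewrite /tilt_op -/z markov_z mulrDr.
apply: sqnorm_add_le; rewrite ?divr_ge0 ?mulr_ge0 ?sqnorm_ge0 //.
  have -> : sqnorm (fun a => s a * m) = m ^+ 2 * sqnorm s.
    by rewrite /sqnorm mulr_sumr; apply: eq_bigr => a _; rewrite exprMn mulrC.
  have m_sqr : m ^+ 2 <= sqnorm s * sqnorm y / n%:R ^+ 2.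
    by rewrite /m expr_div_n ler_wpM2r ?invr_ge0 ?exprn_ge0 ?ler0n ?vdot_sqr_le.
  rewrite (_ : (sqnorm s / n%:R) ^+ 2 * sqnorm y
             = sqnorm s * sqnorm y / n%:R ^+ 2 * sqnorm s); last by field.
  by rewrite ler_wpM2r ?sqnorm_ge0.
have z0_le : sqnorm z0 <= sqnorm z.
  have -> : sqnorm z0 = sqnorm z - n%:R * m ^+ 2.
    rewrite /sqnorm /z0 (eq_bigr (fun b => z b ^+ 2 - (2 * m) * z b + m ^+ 2)) => [|b _].
      by rewrite big_split /= sumrB -mulr_sumr sum_z sumr_const card_ord mulr_natl; ring.
    by ring.
  by rewrite lerBlDr lerDl mulr_ge0 ?ler0n ?sqr_ge0.
apply: le_trans (sqnorm_mul_le _ s_le) _.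
apply: le_trans (ler_wpM2l K_ge0 (contr _ z0_orth)) _.
rewrite (_ : (mu * K) ^+ 2 * sqnorm y = K * (mu ^+ 2 * (K * sqnorm y))); last by ring.
by rewrite !ler_wpM2l ?sqr_ge0 // (le_trans z0_le (sqnorm_mul_le y s_le)).
Qed.

Lemma transfer_sqr (s : 'I_n -> R) k a :
  transfer A d k (fun _ b => s b ^+ 2) a = s a * iter k (tilt_op s) s a.
Proof.
elim: k a => [|k IHk] a /=; first by rewrite mulr1 expr2.
rewrite /tilt_op /markov_op expr2 -mulrA; congr (_ * (_ * _)).
by apply: eq_bigr => b _; rewrite IHk.
Qed.

(* With [s := sqrt g] the expectation is [vdot s (iter l (tilt_op s) s) / n]. *)
Lemma expectWalk_prod_le (g : 'I_n -> R) (K mu : R) l :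
  (0 < n)%N -> 0 <= mu -> (forall a, 0 <= g a <= K) ->
  (forall z, \sum_a z a = 0 -> sqnorm (markov_op A d z) <= mu ^+ 2 * sqnorm z) ->
  expectWalk A d (fun w : {ffun 'I_l.+1 -> 'I_n} => \prod_(i < l.+1) g (w i))
    <= meanU g * (meanU g + mu * K) ^+ l.
Proof.
move=> n_gt0 mu_ge0 g_bd contr.
pose s a := Num.sqrt (g a).
have sqr_s a : s a ^+ 2 = g a by rewrite sqr_sqrtr //; case/andP: (g_bd a).
have meanE : meanU g = sqnorm s / n%:R.
  by rewrite /meanU; congr (_ / _); apply: eq_bigr => a _; rewrite sqr_s.
have K_ge0 : 0 <= K by case/andP: (g_bd (Ordinal n_gt0)); apply: le_trans.
have s_le a : s a ^+ 2 <= K by rewrite sqr_s; case/andP: (g_bd a).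
set rho := meanU g + mu * K.
have rho_ge0 : 0 <= rho by rewrite /rho meanE addr_ge0 ?mulr_ge0 ?divr_ge0 ?sqnorm_ge0.
rewrite expectWalk_prod (eq_bigr (fun a => s a * iter l (tilt_op s) s a)) => [|a _]; last first.
  by rewrite -transfer_sqr; congr transfer; apply/funext => i; apply/funext => b.
rewrite meanE [sqnorm s / _ * _]mulrAC [X in _ <= X]mulrC ler_wpM2l ?invr_ge0 ?ler0n //.
apply: vdot_le; first by rewrite mulr_ge0 ?sqnorm_ge0 ?exprn_ge0.
have := sqnorm_iter_le l s (fun y => sqnorm_tilt_op_le y n_gt0 K_ge0 mu_ge0 s_le contr).
rewrite -meanE -/rho => iter_le.
rewrite (_ : _ ^+ 2 = sqnorm s * ((rho ^+ l) ^+ 2 * sqnorm s)); last by ring.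
by rewrite ler_wpM2l ?sqnorm_ge0.
Qed.
End ProductMoment.

Section Numerics.
Variable R : realType.

Lemma expR1_ge : (256 / 100 : R) <= expR 1.
Proof.
have e8 : (9 / 8 : R) <= expR (1 / 8) by apply: le_trans (expR_ge1Dx _); lra.
rewrite (_ : 1 = 8%:R * (1 / 8)); last by field.
rewrite expRM_natl; apply: le_trans (_ : (9 / 8) ^+ 8 <= _).
  by rewrite !exprS expr0; lra.
by rewrite lerXn2r ?nnegrE ?expR_ge0 //; lra.
Qed.

Lemma expR1_le4 : expR 1 <= 4 :> R.
Proof.
have e2 : (1 / 2 : R) <= expR (- (1 / 2)) by apply: le_trans (expR_ge1Dx _); lra.
have sqrt_e : expR (1 / 2 : R) <= 2.
  have : expR (1 / 2 : R) * expR (- (1 / 2)) = 1 by rewrite -expRD subrr expR0.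
  by have := expR_gt0 (1 / 2 : R); nra.
rewrite (_ : 1 = 2%:R * (1 / 2)); last by field.
by rewrite expRM_natl expr2; have := expR_ge0 (1 / 2 : R); nra.
Qed.

Lemma ln_ge2 (x : R) : 20 <= x -> 2 <= ln x.
Proof.
move=> x_ge20; have e2_le : expR 2 <= x.
  rewrite -(mulr1 (2 : R)) expRM_natl expr2.
  by have := expR1_le4; have := expR_ge0 (1 : R); nra.
by rewrite -[X in X <= _](expRK 2) ler_ln ?posrE ?expR_gt0 //; lra.
Qed.

Lemma expRN_mul_ln3_le (x : R) : 20 <= x -> expR (- (x * ln x ^+ 3)) <= expR (- (8 * x)).
Proof.
move=> x_ge20; have ln_ge := ln_ge2 x_ge20.
have ln3_ge : 8 <= ln x ^+ 3.
  apply: le_trans (_ : 2 ^+ 3 <= _); first by rewrite !exprS expr0; lra.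
  by rewrite lerXn2r ?nnegrE //; lra.
by rewrite ler_expR lerN2 [x * _]mulrC ler_wpM2r //; lra.
Qed.

Lemma constC_ge23 : 23 <= constC R.
Proof.
rewrite /constC -(mulr1 (2 : R)) -(mulr1 (3 : R)) !expRM_natl !exprS expr0 !mulr1.
have := expR1_ge; set e := expR 1 => e_ge.
have e2 : 6 <= e * e by nra.
have e3 : 16 <= e * (e * e) by nra.
lra.
Qed.

End Numerics.

Definition trunc_exp (R : realType) (T y : R) : R := if y < T then expR y else 1.

Section TruncatedExpMoment.
Variable R : realType.

Lemma trunc_exp_ge0 (T y : R) : 0 <= trunc_exp T y.
Proof. by rewrite /trunc_exp; case: ifP; rewrite ?expR_ge0. Qed.

Lemma trunc_exp_le (T y : R) : 0 <= T -> trunc_exp T y <= expR T.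
Proof.
rewrite /trunc_exp => T_ge0; case: ifP => [/ltW|_]; first by rewrite ler_expR.
by apply: le_trans (expR_ge1Dx _); lra.
Qed.

(* Below [20] bound [expR y] by [expR 20]; above, by [expR (k + 1)] on the
   unit shell [k <= y < k + 1]. *)
Lemma trunc_exp_le_shells (T : nat) (y : R) : 0 <= y ->
  trunc_exp T%:R y <=
    expR 20 + \sum_(k < T | (20 <= k)%N) expR k.+1%:R * (k%:R <= y)%R%:R.
Proof.
move=> y_ge0.
set shells := \sum_(k < T | _) _.
have shells_ge0 : 0 <= shells.
  by apply: sumr_ge0 => k _; rewrite mulr_ge0 ?expR_ge0 ?ler0n.
have le_e20 z : z <= expR 20 -> z <= expR 20 + shells.
  by move=> z_le; apply: le_trans z_le _; rewrite lerDl.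
rewrite /trunc_exp; case: ifP => [y_lt_T|_]; last first.
  by apply: le_e20; apply: le_trans (expR_ge1Dx _); lra.
have [y_lt20|y_ge20] := ltP y 20; first by apply: le_e20; rewrite ler_expR ltW.
have /andP [k_le_y y_lt_k1] := truncn_itv y_ge0; set k := Num.truncn y in k_le_y y_lt_k1.
have k_ge20 : (20 <= k)%N.
  by rewrite -ltnS -(ltr_nat R) (le_lt_trans y_ge20).
have k_lt_T : (k < T)%N by rewrite -(ltr_nat R) (le_lt_trans k_le_y).
rewrite /shells addrC (bigD1 (Ordinal k_lt_T)) //= k_le_y mulr1 -addrA.
rewrite (le_trans (ltW (_ : expR y < expR k.+1%:R))) ?ltr_expR // lerDl.
by rewrite addr_ge0 ?expR_ge0 //; apply: sumr_ge0 => j _; rewrite mulr_ge0 ?expR_ge0 ?ler0n.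
Qed.

Lemma sum_shells_le1 (T : nat) (p : nat -> R) :
  (forall k, (20 <= k)%N -> p k <= expR (- (8 * k%:R))) ->
  \sum_(k < T | (20 <= k)%N) expR k.+1%:R * p k <= 1.
Proof.
move=> p_le; pose u k : R := expR (- k%:R).
have eN1 : expR (-1 : R) <= 1 / 2.
  have e1 : expR (-1 : R) * expR 1 = 1 by rewrite -expRD addNr expR0.
  by have := expR1_ge R; have := expR_gt0 (-1 : R); nra.
have shell_le k : (20 <= k)%N -> expR k.+1%:R * p k <= u k - u k.+1.
  move=> k_ge20; have k_ge : (20 : R) <= k%:R by rewrite ler_nat.
  apply: le_trans (ler_wpM2l (expR_ge0 _) (p_le k k_ge20)) _.
  have -> : expR k.+1%:R * expR (- (8 * k%:R)) = expR (- k%:R) * expR (1 - 6 * k%:R) :> R.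
    by rewrite -!expRD; congr expR; rewrite -addn1 natrD; ring.
  have -> : u k - u k.+1 = expR (- k%:R) * (1 - expR (-1)).
    by rewrite /u mulrBr mulr1 -expRD; congr (_ - expR _); rewrite -addn1 natrD; ring.
  rewrite ler_wpM2l ?expR_ge0 // (@le_trans _ _ (expR (-1))) ?ler_expR //; lra.
apply: le_trans (_ : \sum_(k < T) (u k - u k.+1) <= _).
  rewrite big_mkcond /=; apply: ler_sum => k _; case: ifP => [/shell_le //|_].
  by rewrite subr_ge0 ler_expR lerN2 ler_nat.
rewrite (eq_bigr (fun k : 'I_T => - (u k.+1 - u k))) => [|k _]; last by rewrite opprB.
rewrite sumrN -(big_mkord xpredT (fun k => u k.+1 - u k)) telescope_sumr // opprB.
by rewrite /u mulr0n oppr0 expR0 lerBlDr lerDl expR_ge0.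
Qed.

Lemma meanU_trunc_exp_le n (f : 'I_n -> R) (T : nat) :
  (forall v, 0 <= f v) ->
  (forall x : R, 20 <= x -> prU R (fun v => x <= f v) <= expR (- (x * ln x ^+ 3))) ->
  meanU (fun a => trunc_exp T%:R (f a)) <= expR 20 + 1.
Proof.
move=> f_ge0 tail.
have [n0|n_gt0] := posnP n.
  by rewrite /meanU (_ : n%:R = 0) ?n0 // invr0 mulr0 addr_ge0 ?expR_ge0.
pose shell (k : nat) a : R := (k%:R <= f a)%R%:R.
apply: le_trans (_ : meanU (fun a => expR 20 + \sum_(k < T | (20 <= k)%N)
                                         expR k.+1%:R * shell k a) <= _).
  by rewrite ler_wpM2r ?invr_ge0 ?ler0n //; apply: ler_sum => a _; apply: trunc_exp_le_shells.
rewrite /meanU big_split /= sumr_const card_ord mulrDl -[expR 20 *+ n]mulr_natr.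
rewrite mulfK ?pnatr_eq0 -?lt0n //.
rewrite lerD2l exchange_big /= mulr_suml.
rewrite (eq_bigr (fun k : 'I_T => expR k.+1%:R * prU R (fun v => k%:R <= f v))) => [|k _].
  apply: (@sum_shells_le1 _ (fun k : nat => prU R (fun v => k%:R <= f v))) => k k_ge20.
  have k_ge : (20 : R) <= k%:R by rewrite ler_nat.
  exact: le_trans (tail _ k_ge) (expRN_mul_ln3_le k_ge).
by rewrite -mulr_sumr -mulrA /prU -sum_nat_of_bool.
Qed.
End TruncatedExpMoment.

Lemma one_le_exceed_add_exp (R : realType) l (y : 'I_l -> R) (T x : R) :
  x <= \sum_i y i ->
  1 <= \sum_i (T <= y i)%R%:R + expR (- x) * \prod_i trunc_exp T (y i).
Proof.
move=> x_le.
have exceed_ge0 : 0 <= \sum_i (T <= y i)%R%:R :> R by apply: sumr_ge0 => i _; rewrite ler0n.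
have exp_ge0 : 0 <= expR (- x) * \prod_i trunc_exp T (y i).
  by rewrite mulr_ge0 ?expR_ge0 // prodr_ge0 // => i _; rewrite trunc_exp_ge0.
have [[i T_le]|all_lt] := pselect (exists i, T <= y i).
  rewrite (bigD1 i) //= T_le -addrA lerDl addr_ge0 //.
  by apply: sumr_ge0 => j _; rewrite ler0n.
have y_lt i : y i < T by rewrite ltNge; apply/negP => T_le; apply: all_lt; exists i.
rewrite big1 ?add0r => [|i _]; last by rewrite leNgt y_lt.
rewrite (eq_bigr (fun i => expR (y i))) => [|i _]; last by rewrite /trunc_exp y_lt.
rewrite -expR_sum -expRD; apply: le_trans _ (expR_ge1Dx _).
by rewrite lerDl addrC subr_ge0.
Qed.

Lemma prWalk_sum_ge_le (R : realType) n (A : 'M[nat]_n) d l (f : 'I_n -> R) (T x : R) :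
  regular A d ->
  prWalk R A d l (fun w => x <= \sum_(i < l) f (w i)) <=
    l%:R * prU R (fun v => T <= f v)
    + expR (- x) * expectWalk A d (fun w => \prod_(i < l) trunc_exp T (f (w i))).
Proof.
move=> regA.
pose F w := \sum_(i < l) (T <= f (w i))%R%:R
             + expR (- x) * \prod_(i < l) trunc_exp T (f (w i)).
have F_ge0 w : 0 <= F w.
  rewrite addr_ge0 ?mulr_ge0 ?expR_ge0 //; first by apply: sumr_ge0 => i _; rewrite ler0n.
  by apply: prodr_ge0 => i _; rewrite trunc_exp_ge0.
have F_ge1 w : x <= \sum_(i < l) f (w i) -> 1 <= F w := @one_le_exceed_add_exp R l _ T x.
apply: le_trans (prWalk_le_expectWalk A d F_ge0 F_ge1) _.
rewrite /expectWalk /F.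
under eq_bigr do rewrite mulrDr mulr_sumr mulrCA.
rewrite big_split /= exchange_big /= -mulr_sumr.
rewrite (eq_bigr (fun _ => prU R (fun v => T <= f v))) => [|i _]; last first.
  exact: (expectWalk_marginal R regA i (fun v => T <= f v)).
by rewrite sumr_const card_ord mulr_natl.
Qed.

Section FinalEstimates.
Variable R : realType.

Lemma mul_expR_threshold_le l (mu : R) :
  0 <= mu -> mu <= expR (- (l.+1%:R * ln l.+1%:R ^+ 3)) ->
  mu * expR (maxn l.+1 20)%:R <= expR 20.
Proof.
move=> mu_ge0 mu_le; have [l_lt20|l_ge20] := ltnP l 20.
  rewrite (maxn_idPr l_lt20) -[X in _ <= X]mul1r ler_wpM2r ?expR_ge0 //.
  apply: le_trans mu_le _; rewrite expR_le1 oppr_le0 mulr_ge0 ?ler0n //.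
  by rewrite exprn_ge0 // ln_ge0 // ler1n.
have L_ge20 : (20 : R) <= l.+1%:R by rewrite ler_nat leqW.
rewrite (maxn_idPl (leqW l_ge20)).
apply: le_trans (ler_wpM2r (expR_ge0 _) (le_trans mu_le (expRN_mul_ln3_le L_ge20))) _.
by rewrite -expRD ler_expR; lra.
Qed.

Lemma mul_prU_tail_le n (f : 'I_n -> R) (L T : R) :
  (forall x : R, 20 <= x -> prU R (fun v => x <= f v) <= expR (- (x * ln x ^+ 3))) ->
  1 <= L -> L <= T -> 20 <= T -> L * prU R (fun v => T <= f v) <= expR (- (7 * L)).
Proof.
move=> tail L_ge1 L_le_T T_ge20.
have pr_le := le_trans (tail _ T_ge20) (expRN_mul_ln3_le T_ge20).
apply: le_trans (ler_pM _ _ (_ : L <= expR L) pr_le) _.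
- lra.
- by rewrite /prU divr_ge0 ?ler0n.
- by apply: le_trans (expR_ge1Dx _); lra.
by rewrite -expRD ler_expR; lra.
Qed.

Lemma expR21_ge : expR 20 + 1 + expR 20 <= expR 21 :> R.
Proof.
have e20 : 21 <= expR (20 : R) by apply: le_trans (expR_ge1Dx _); lra.
have -> : (21 : R) = 20 + 1 by lra.
by rewrite (expRD 20 1); have := ler_wpM2l (expR_ge0 20) (expR1_ge R); lra.
Qed.

Lemma expRN7_add_expRN2_le (L : R) : 1 <= L ->
  expR (- (7 * L)) + expR (- (2 * L)) <= expR (- L).
Proof.
move=> L_ge1; set u := expR (- L); have u_gt0 : 0 < u := expR_gt0 _.
have u_le : u <= 1 / 2.
  have : u * expR L = 1 by rewrite -expRD addNr expR0.
  by have := expR_ge1Dx L; nra.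
have -> : expR (- (2 * L)) = u * u by rewrite -expRD; congr expR; lra.
have : expR (- (7 * L)) <= u * u by rewrite -expRD ler_expR; lra.
nra.
Qed.

End FinalEstimates.

Lemma expectWalk_trunc_exp_le (R : realType) n (A : 'M[nat]_n) d (lam : R) l
    (f : 'I_n -> R) :
  expander A d lam -> (0 < n)%N -> (forall v, 0 <= f v) ->
  (forall x : R, 20 <= x -> prU R (fun v => x <= f v) <= expR (- (x * ln x ^+ 3))) ->
  lam <= expR (- (l.+1%:R * ln l.+1%:R ^+ 3)) ->
  expectWalk A d (fun w : {ffun 'I_l.+1 -> 'I_n} =>
                    \prod_(i < l.+1) trunc_exp (maxn l.+1 20)%:R (f (w i)))
    <= expR 21 ^+ l.+1.
Proof.
move=> expA n_gt0 f_ge0 tail lam_le; have [regA _] := expA.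
set T := maxn l.+1 20; set mu := Num.max lam 0.
have mu_ge0 : 0 <= mu by rewrite le_max lexx orbT.
have contr z : \sum_a z a = 0 -> sqnorm (markov_op A d z) <= mu ^+ 2 * sqnorm z.
  by apply: expander_contraction expA _; rewrite le_max lexx.
have g_bd a : 0 <= trunc_exp T%:R (f a) <= expR T%:R.
  by rewrite trunc_exp_ge0 trunc_exp_le ?ler0n.
apply: le_trans (expectWalk_prod_le regA l n_gt0 mu_ge0 g_bd contr) _.
have mean_le := meanU_trunc_exp_le T f_ge0 tail.
have muK_le : mu * expR T%:R <= expR 20.
  by apply: mul_expR_threshold_le mu_ge0 _; rewrite ge_max lam_le expR_ge0.
have mean_ge0 : 0 <= meanU (fun a => trunc_exp T%:R (f a)).
  by rewrite /meanU divr_ge0 ?ler0n //; apply: sumr_ge0 => a _; rewrite trunc_exp_ge0.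
have e21 := expR21_ge R.
have sum_le : meanU (fun a => trunc_exp T%:R (f a)) + mu * expR T%:R <= expR 21 by lra.
have sum_ge0 : 0 <= meanU (fun a => trunc_exp T%:R (f a)) + mu * expR T%:R.
  by rewrite addr_ge0 // mulr_ge0 ?expR_ge0.
rewrite exprS; apply: ler_pM; rewrite ?exprn_ge0 ?lerXn2r ?nnegrE ?expR_ge0 //.
by have := expR_ge0 (20 : R); lra.
Qed.

Unset Implicit Arguments.
Set Strict Implicit.

Theorem lemma5 (R : realType) (n : nat) (A : 'M[nat]_n) (d : nat) (lam : R)
  (l : nat) (f : 'I_n -> R) :
  expander A d lam ->
  (1 <= l)%N ->
  (forall v, 0 <= f v) ->
  (forall x : R, 20 <= x ->
     prU R (fun v => x <= f v) <= expR (- (x * ln x ^+ 3))) ->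
  lam <= expR (- (l%:R * ln (l%:R : R) ^+ 3)) ->
  prWalk R A d l (fun w => constC R * l%:R <= \sum_(i < l) f (w i))
    <= expR (- (l%:R : R)).
Proof.
case: l => [//|l] expA _ f_ge0 tail lam_le; have [regA _] := expA.
have [n0|n_gt0] := posnP n.
  rewrite /prWalk big_pred0 ?expR_ge0 // => w.
  by exfalso; case: (w ord0) => v; rewrite n0.
set L : R := l.+1%:R; set T := maxn l.+1 20.
have L_ge1 : 1 <= L by rewrite ler1n.
apply: le_trans (prWalk_sum_ge_le _ _ T%:R _ regA) _.
have exceed_le : L * prU R (fun v => T%:R <= f v) <= expR (- (7 * L)).
  by apply: mul_prU_tail_le; rewrite // ler_nat ?leq_maxl ?leq_maxr.
have moment_le := expectWalk_trunc_exp_le expA n_gt0 f_ge0 tail lam_le.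
have prod_le : expR (- (constC R * L)) * expectWalk A d
    (fun w => \prod_(i < l.+1) trunc_exp T%:R (f (w i))) <= expR (- (2 * L)).
  apply: le_trans (ler_wpM2l (expR_ge0 _) moment_le) _.
  rewrite -expRM_natl -expRD ler_expR -/L; have := constC_ge23 R; nra.
exact: le_trans (lerD exceed_le prod_le) (expRN7_add_expRN2_le L_ge1).
Qed.
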